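(* Let $\{x_i,v_i\}_{i\in[N]}$ be the global solution of the delayed Cucker–Smale system described in the context, and let $K$ be the smallest integer such that $K\sigma\ge2\tau$. Then for all $i,j\in[N]$, \[ |x_j(\tau)-x_i(2\tau-\sigma)|\le\Delta^0_x+\mathcal{W}^K_\sigma\Delta^0_v, \] where $\mathcal{W}^K_\sigma:=Z^K_\sigma-(1+\sigma)(Z^{K-1}_\sigma+1)$.
   Context: Let $N\ge2$, $d\ge1$ be integers, $[N]=\{1,\dots,N\}$, $0\le\sigma\le\tau$. Let $\psi:[0,\infty)\to[0,\infty)$ be continuous, nonincreasing, positive everywhere, with $\sup\psi\le1$. Given $x_i^0\in C^1([-\tau,0],\mathbb{R}^d)$, $v_i^0\in C([-\tau,0],\mathbb{R}^d)$ with $\frac{\mathrm d}{\mathrm dt}x_i^0=v_i^0$, $\{x_i,v_i\}$ is the global solution of $\dot x_i(t)=v_i(t)$, $\dot v_i(t)=\sum_{j\ne i}a_{ij}(t)(v_j(t-\tau)-v_i(t-\sigma))$ for $t>0$, with $a_{ij}(t)=\frac1{N-1}\psi(|x_i(t-\sigma)-x_j(t-\tau)|)$, and $x_i=x_i^0$, $v_i=v_i^0$ on $[-\tau,0]$. $\Delta^0_x:=\max_{i,j}\max_{s,t\in[-\tau,0]}|x_i^0(s)-x_j^0(t)|$, $\Delta^0_v:=\max_{i,j}\max_{s,t\in[-\tau,0]}|v_i^0(s)-v_j^0(t)|$. For $k\ge0$, \[ Z^k_\sigma:=\frac{1}{2\sqrt{\sigma(1+\sigma)}}\Big[\big((1+\sigma)+\sqrt{\sigma(1+\sigma)}\big)^{k+1}-\big((1+\sigma)-\sqrt{\sigma(1+\sigma)}\big)^{k+1}\Big],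 \] a polynomial in $\sigma$; equivalently $Z^0_\sigma=1$, $Z^k_\sigma=1+(1+\sigma)Z^{k-1}_\sigma+\sigma\sum_{m=0}^{k-1}Z^m_\sigma$ for $k\ge1$. *)

From HB Require Import structures.
From mathcomp Require Import all_boot all_order all_algebra.
From mathcomp Require Import all_classical all_reals all_analysis.
Set Implicit Arguments. Unset Strict Implicit. Unset Printing Implicit Defensive.
Import Order.TTheory GRing.Theory Num.Theory.
Import numFieldNormedType.Exports.
Local Open Scope classical_set_scope.
Local Open Scope ring_scope.

Definition enorm {R : realType} {d : nat} (u : 'rV[R]_d) : R :=
  Num.sqrt (\sum_(k < d) u ord0 k ^+ 2).

(* Z_pair k = (Z^k_sigma, \sum_{m=0}^{k} Z^m_sigma), via the recurrence
   Z^0 = 1, Z^k = 1 + (1+sigma) Z^{k-1} + sigma \sum_{m=0}^{k-1} Z^m. *)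
Fixpoint Z_pair {R : realType} (sigma : R) (k : nat) : R * R :=
  match k with
  | 0%N => (1, 1)
  | k'.+1 =>
      let p := Z_pair sigma k' in
      let z := 1 + (1 + sigma) * p.1 + sigma * p.2 in
      (z, p.2 + z)
  end.

Definition Zs {R : realType} (sigma : R) (k : nat) : R := (Z_pair sigma k).1.

Definition Ws {R : realType} (sigma : R) (K : nat) : R :=
  Zs sigma K - (1 + sigma) * (Zs sigma K.-1 + 1).

Definition cs_weight {R : realType} {N d : nat} (psi : R -> R)
  (sigma tau : R) (x : 'I_N -> R -> 'rV[R]_d) (i j : 'I_N) (t : R) : R :=
  (N.-1)%:R^-1 * psi (enorm (x i (t - sigma) - x j (t - tau))).

Definition Delta0 {R : realType} {N d : nat} (tau : R)
  (y : 'I_N -> R -> 'rV[R]_d) : R :=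
  sup [set r : R | exists i j s t, s \in `[- tau, 0] /\ t \in `[- tau, 0] /\
                    r = enorm (y i s - y j t)].

From HB Require Import structures.
From mathcomp Require Import all_boot all_order all_algebra.
From mathcomp Require Import all_classical all_reals all_analysis.
From mathcomp Require Import ring lra.
Import Order.TTheory GRing.Theory Num.Theory.
Import numFieldNormedType.Exports.
Local Open Scope classical_set_scope.
Local Open Scope ring_scope.

(* Choose u with |u| <= 1 and <u, x_j(tau) - x_i(2 tau - sigma)> = |x_j(tau) - x_i(2 tau - sigma)|
   and work with the projections <u, .>.  As the weights a_ij are nonnegative with row sums at
   most 1, on [m sigma, (m+1) sigma] every projected acceleration is bounded by the diameter of the
   projected velocities on [-tau, m sigma]; over one step of length sigma both velocities of a
   difference drift by at most sigma times that diameter, so the diameter is at most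
   (1 + 2 sigma)^m Delta_v^0 on [-tau, m sigma].  The same quantity bounds the derivative
   <u, v_j(t - tau) - v_i(t - sigma)> of the projected gap on [m sigma, (m+1) sigma]; summing the
   K steps that cover [0, 2 tau] bounds the gap by Delta_x^0 + sigma (sum_(m<K) (1 + 2 sigma)^m)
   Delta_v^0, and this geometric sum is at most W^K_sigma. *)

Section RowDot.
Context {R : realType} {d : nat}.
Implicit Types u w a b : 'rV[R]_d.

Definition dotv u w : R := \sum_(k < d) u ord0 k * w ord0 k.

Fact dotv_is_scalar u : scalar (dotv u).
Proof.
move=> c a b; rewrite /dotv mulr_sumr -big_split /=.
by apply: eq_bigr => k _; rewrite !mxE mulrDr mulrCA.
Qed.

HB.instance Definition _ u :=
  GRing.isLinear.Build R 'rV[R]_d R *%R (dotv u) (dotv_is_scalar u).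

Lemma dotvC u w : dotv u w = dotv w u.
Proof. by apply: eq_bigr => k _; rewrite mulrC. Qed.

Lemma dotvBl a b w : dotv (a - b) w = dotv a w - dotv b w.
Proof. by rewrite dotvC linearB /= !(dotvC w). Qed.

Lemma dotvZl c a w : dotv (c *: a) w = c * dotv a w.
Proof. by rewrite dotvC linearZ /= dotvC. Qed.

Lemma dotvv a : dotv a a = enorm a ^+ 2.
Proof.
rewrite /enorm sqr_sqrtr; last by apply: sumr_ge0 => k _; exact: sqr_ge0.
by apply: eq_bigr => k _; rewrite expr2.
Qed.

Lemma enorm_ge0 a : 0 <= enorm a.
Proof. exact: sqrtr_ge0. Qed.

Lemma enormZ c a : enorm (c *: a) = `|c| * enorm a.
Proof.
rewrite /enorm -sqrtr_sqr -sqrtrM ?sqr_ge0 //; congr Num.sqrt.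
by rewrite mulr_sumr; apply: eq_bigr => k _; rewrite mxE exprMn.
Qed.

Lemma coord_le_mxnorm a k : `|a ord0 k| <= `|a|.
Proof.
rewrite [leRHS]/Num.Def.normr /= mx_normrE.
exact: (le_bigmax _ _ (ord0, k)).
Qed.

Lemma enorm_le_mxnorm a : enorm a <= Num.sqrt d%:R * `|a|.
Proof.
rewrite -(normr_id a) -sqrtr_sqr -sqrtrM ?ler0n // ler_sqrt; last first.
  by rewrite mulr_ge0 ?ler0n ?sqr_ge0.
rewrite -[d in d%:R]card_ord -sumr_const mulr_suml; apply: ler_sum => k _; rewrite mul1r.
have := coord_le_mxnorm a k; rewrite ler_norml => /andP[? ?]; nra.
Qed.

(* From [0 <= |a - <u, a> u|^2 <= |a|^2 - <u, a>^2]. *)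
Lemma norm_dotv_le u a : enorm u <= 1 -> `|dotv u a| <= enorm a.
Proof.
move=> u1; set c := dotv u a.
have : 0 <= dotv (a - c *: u) (a - c *: u) by rewrite dotvv sqr_ge0.
rewrite dotvBl ![dotv _ (_ - _)]linearB /= !dotvZl ![dotv _ (_ *: _)]linearZ /=.
rewrite (dotvC a u) -/c !dotvv => h.
have u2 : enorm u ^+ 2 <= 1 by rewrite expr_le1 ?enorm_ge0.
rewrite -(ler_pXn2r (isT : (0 < 2)%N)) ?nnegrE ?enorm_ge0 // real_normK ?num_real //.
have := sqr_ge0 c; nra.
Qed.

Lemma exists_dotv_enorm w : exists2 u, enorm u <= 1 & dotv u w = enorm w.
Proof.
have [w0|wn0] := eqVneq (enorm w) 0.
  exists 0; last by rewrite w0 dotvC linear0.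
  by rewrite /enorm big1 ?sqrtr0 // => k _; rewrite mxE expr0n.
have e0 : 0 < enorm w by rewrite lt_neqAle eq_sym wn0 enorm_ge0.
exists ((enorm w)^-1 *: w).
  by rewrite enormZ ger0_norm ?invr_ge0 ?enorm_ge0 // mulVf.
by rewrite dotvZl dotvv expr2 mulKf.
Qed.

Lemma dotv_continuous u : continuous (dotv u).
Proof.
have -> : dotv u = \sum_(k < d) (fun w : 'rV[R]_d => u ord0 k * w ord0 k).
  by rewrite fct_sumE; apply/funext.
elim/big_ind: _ => [|f g cf cg|k _] w.
- exact: cst_continuous.
- exact: (cvgD (cf w) (cg w)).
- apply: (@continuousZ _ R^o _ (fun=> u ord0 k) (fun w : 'rV[R]_d => w ord0 k : R^o)).
    exact: cst_continuous.
  exact: coord_continuous.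
Qed.

Lemma is_derive_dotv u (f : R -> 'rV[R]_d) (t : R) (df : 'rV[R]_d) :
  is_derive t 1 f df -> is_derive t 1 (fun s => dotv u (f s)) (dotv u df).
Proof.
move=> fd; have dv : derivable f t 1 by case: fd.
have coord k : is_derive t 1 (fun s => f s ord0 k) (df ord0 k).
  apply: DeriveDef; first exact: (derivable_mxP f t 1).1 dv ord0 k.
  by move: (derive_mx dv); rewrite derive_val => ->; rewrite mxE.
have -> : (fun s => dotv u (f s)) = \sum_(k < d) (u ord0 k \*: (fun s => f s ord0 k)).
  by rewrite fct_sumE; apply/funext.
exact: is_derive_sum.
Qed.

End RowDot.

Section RealCalculus.
Context {R : realType}.

Lemma diff_le_of_derive_le (f df : R -> R) (a b M : R) : a <= b ->
  (forall t, t \in `]a, b[ -> is_derive t 1 f (df t)) ->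
  (forall t, t \in `]a, b[ -> df t <= M) ->
  {within `[a, b], continuous f} -> f b - f a <= M * (b - a).
Proof.
move=> ab fd dM fc; have [->|nab] := eqVneq a b; first by rewrite !subrr mulr0.
have altb : a < b by rewrite lt_neqAle nab.
have [c cab ->] := MVT altb fd fc.
by rewrite ler_wpM2r ?subr_ge0 ?dM.
Qed.

Lemma norm_diff_le_of_derive_le (f df : R -> R) (a b M : R) : a <= b ->
  (forall t, t \in `]a, b[ -> is_derive t 1 f (df t)) ->
  (forall t, t \in `]a, b[ -> `|df t| <= M) ->
  {within `[a, b], continuous f} -> `|f b - f a| <= M * (b - a).
Proof.
move=> ab fd dM fc; rewrite ler_norml; apply/andP; split; last first.
  apply: diff_le_of_derive_le fd _ fc => // t /dM; exact: le_trans (ler_norm _).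
rewrite lerNl opprB -(opprK (f a)) addrC.
apply: (@diff_le_of_derive_le (fun t => - f t) (fun t => - df t)) => //.
- by move=> t /fd; exact: is_deriveN.
- by move=> t /dM; rewrite -normrN; exact: le_trans (ler_norm _).
- by move=> t; exact: (cvgN (fc t)).
Qed.

Lemma within_continuous_shift (V : topologicalType) (f : R -> V) (A B : set R) c :
  {within B, continuous f} -> (forall s, A s -> B (s - c)) ->
  {within A, continuous (fun s => f (s - c))}.
Proof.
move=> /subspace_continuousP fc AB; apply/subspace_continuousP => s As.
apply: (cvg_comp (fun s => s - c) f _ (fc _ (AB _ As))).
move=> P /= [e e0 He]; exists e => // r /= sr Ar.
apply: He; last exact: AB.
by rewrite /ball_ /= (_ : s - c - (r - c) = s - r) //; lra.
Qed.

Lemma is_derive_shift_arg (V : normedModType R) (f : R -> V) (t c : R) (df : V) :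
  is_derive (t - c) 1 f df -> is_derive t 1 (fun s => f (s - c)) df.
Proof.
case=> dv dval.
have E : (fun h : R => h^-1 *: ((fun s => f (s - c)) (h *: 1 + t) - f (t - c)))
       = (fun h : R => h^-1 *: (f (h *: 1 + (t - c)) - f (t - c))).
  by apply/funext => h /=; rewrite addrA.
by apply: DeriveDef; rewrite /derivable /derive E.
Qed.

End RealCalculus.

Lemma norm_wsum_le {R : realType} {I : finType} (P : pred I) (w f : I -> R) (B : R) :
  0 <= B -> (forall j, P j -> 0 <= w j) -> \sum_(j | P j) w j <= 1 ->
  (forall j, P j -> `|f j| <= B) -> `|\sum_(j | P j) w j * f j| <= B.
Proof.
move=> B0 w0 w1 fB; apply: le_trans (ler_norm_sum _ _ _) _.
apply: (@le_trans _ _ (\sum_(j | P j) w j * B)).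
  by apply: ler_sum => j Pj; rewrite normrM ger0_norm ?w0 // ler_wpM2l ?w0 ?fB.
by rewrite -mulr_suml ler_piMl.
Qed.

Section InitialDiameter.
Context {R : realType}.

Lemma bounded_family_on_compact {I : finType} {T : topologicalType}
    {V : normedModType R} {A : set T} {y : I -> T -> V} :
  compact A -> (forall i, {within A, continuous (y i)}) ->
  exists M, forall i s, A s -> `|y i s| <= M.
Proof.
move=> cA cy.
have bnd i : exists M : R, forall s, A s -> `|y i s| <= M.
  have [M0 [_ HM]] := compact_bounded (continuous_compact (cy i) cA).
  by exists (M0 + 1) => s As; apply: HM; [rewrite ltrDl | exists s].
have [M HM] := fin_all_exists bnd.
exists (\sum_i `|M i|) => i s As.
apply: le_trans (HM i s As) _; apply: le_trans (ler_norm _) _.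
by rewrite (bigD1 i) //= lerDl sumr_ge0.
Qed.

Context {N d : nat} {tau : R} {y : 'I_N -> R -> 'rV[R]_d}.
Hypothesis y_cont : forall i, {within `[- tau, +oo[, continuous (y i)}.

Lemma enorm_le_Delta0 i j {s t} : s \in `[- tau, 0] -> t \in `[- tau, 0] ->
  enorm (y i s - y j t) <= Delta0 tau y.
Proof.
move=> hs ht; apply: ub_le_sup; last by exists i, j, s, t.
have cy i' : {within `[- tau, 0], continuous (y i')}.
  by apply: continuous_subspaceW (y_cont i') => r /=; rewrite !in_itv /= => /andP[-> _].
have [M HM] := bounded_family_on_compact (@segment_compact R (- tau) 0) cy.
exists (Num.sqrt d%:R * (M + M)) => _ [i1 [j1 [s1 [t1 [h1 [h2 ->]]]]]].
apply: le_trans (enorm_le_mxnorm _) _; rewrite ler_wpM2l ?sqrtr_ge0 //.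
by apply: le_trans (ler_normB _ _) _; rewrite lerD ?HM.
Qed.

Lemma Delta0_ge0 (i : 'I_N) : 0 <= tau -> 0 <= Delta0 tau y.
Proof.
move=> tau0; have s0 : (0 : R) \in `[- tau, 0] by rewrite in_itv /= oppr_le0 tau0 lexx.
exact: le_trans (enorm_ge0 _) (enorm_le_Delta0 i i s0 s0).
Qed.

End InitialDiameter.

Section ZConstants.
Context {R : realType}.

Lemma Z_pair_bounds {s : R} n : 0 <= s ->
  [/\ 1 <= (Z_pair s n).1, (Z_pair s n).1 <= (Z_pair s n).2 &
      \sum_(m < n.+1) (1 + 2 * s) ^+ m <= (Z_pair s n).1].
Proof.
move=> s0; elim: n => [|n [z1 zS zq]]; first by rewrite /= big_ord1 expr0.
rewrite /= big_ord_recl expr0.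
under eq_bigr => m _ do rewrite exprS.
rewrite -mulr_sumr.
have : (1 + 2 * s) * \sum_(m < n.+1) (1 + 2 * s) ^+ m <= (1 + 2 * s) * (Z_pair s n).1.
  by rewrite ler_wpM2l // addr_ge0 // mulr_ge0.
split; nra.
Qed.

Lemma Ws_SS (s : R) k : Ws s k.+2 = s * ((Z_pair s k.+1).2 - 1).
Proof. by rewrite /Ws /Zs /=; lra. Qed.

Lemma geometric_le_Ws (s : R) K : 0 <= s -> (2 <= K)%N ->
  s * \sum_(m < K) (1 + 2 * s) ^+ m <= Ws s K.
Proof.
move=> s0; case: K => [|[|k]] // _; rewrite Ws_SS ler_wpM2l //=.
have [_ _ /= zq] := Z_pair_bounds k.+1 s0.
have [z1 zS _] := Z_pair_bounds k s0.
lra.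
Qed.

End ZConstants.

Section CuckerSmale.
Context {R : realType} {N d : nat} {sigma tau : R} {psi : R -> R}.
Context {x v : 'I_N -> R -> 'rV[R]_d}.
Hypotheses (hN : (2 <= N)%N) (hsig : 0 < sigma) (hst : sigma <= tau).
Hypotheses (psi_pos : forall r : R, 0 <= r -> 0 < psi r)
  (psi_le1 : forall r : R, 0 <= r -> psi r <= 1).

(* [lra] ignores section hypotheses, so the standing ones are passed explicitly. *)
Local Ltac cs_lra := move: hsig hst; lra.

Lemma cs_weight_ge0 i j (t : R) : 0 <= cs_weight psi sigma tau x i j t.
Proof. by rewrite mulr_ge0 ?invr_ge0 ?ler0n // ltW // psi_pos // enorm_ge0. Qed.

Lemma cs_weight_sum_le1 i (t : R) :
  \sum_(j < N | j != i) cs_weight psi sigma tau x i j t <= 1.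
Proof.
have N1 : (N.-1)%:R != 0 :> R by rewrite pnatr_eq0 -lt0n -subn1 subn_gt0.
apply: (@le_trans _ _ (\sum_(j < N | j != i) (N.-1)%:R^-1)).
  by apply: ler_sum => j _; rewrite ler_piMr ?invr_ge0 ?ler0n // psi_le1 // enorm_ge0.
by rewrite sumr_const cardC1 card_ord -[_ *+ _]mulr_natl mulfV.
Qed.

Definition cs_accel i (t : R) := \sum_(j < N | j != i)
  cs_weight psi sigma tau x i j t *: (v j (t - tau) - v i (t - sigma)).

Hypotheses (x_cont : forall i, {within `[- tau, +oo[, continuous (x i)})
  (v_cont : forall i, {within `[- tau, +oo[, continuous (v i)})
  (x_deriv : forall i (t : R), - tau < t -> is_derive t 1 (x i) (v i t))
  (v_ode : forall i (t : R), 0 < t -> is_derive t 1 (v i) (cs_accel i t)).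

Section Projection.
Variable u : 'rV[R]_d.
Hypothesis u1 : enorm u <= 1.

Definition proj_velocity_diam_le (T B : R) := forall a b (s s' : R),
  s \in `[- tau, T] -> s' \in `[- tau, T] -> `|dotv u (v a s - v b s')| <= B.

Lemma proj_velocity_diam_le_mono (T T' B : R) : T' <= T ->
  proj_velocity_diam_le T B -> proj_velocity_diam_le T' B.
Proof.
move=> TT hB a b s s'; rewrite !in_itv /= => /andP[s1 s2] /andP[s3 s4].
by apply: hB; rewrite in_itv /=; apply/andP; split; lra.
Qed.

Lemma norm_dotv_accel_le i (t B : R) : 0 <= t -> 0 <= B ->
  proj_velocity_diam_le (t - sigma) B -> `|dotv u (cs_accel i t)| <= B.
Proof.
move=> t0 B0 hB; rewrite /cs_accel linear_sum.
under eq_bigr do rewrite linearZ.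
apply: norm_wsum_le => //.
- by move=> j _; exact: cs_weight_ge0.
- exact: cs_weight_sum_le1.
- by move=> j _; apply: hB; rewrite in_itv /=; apply/andP; split; cs_lra.
Qed.

Lemma proj_velocity_drift {T B : R} a {s : R} : 0 <= T -> 0 <= B ->
  proj_velocity_diam_le T B -> s \in `[- tau, T + sigma] ->
  `|dotv u (v a s) - dotv u (v a (Num.min s T))| <= B * sigma.
Proof.
move=> T0 B0 hB; rewrite in_itv /= => /andP[s1 s2].
have [sT|Ts] := leP s T; first by rewrite subrr normr0 mulr_ge0 // ltW.
apply: (@le_trans _ _ (B * (s - T))); last by rewrite ler_wpM2l //; cs_lra.
apply: (norm_diff_le_of_derive_le (fun t => dotv u (v a t)) (fun t => dotv u (cs_accel a t))).
- exact: ltW.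
- move=> t; rewrite in_itv /= => /andP[t1 _].
  by apply: is_derive_dotv; apply: v_ode; cs_lra.
- move=> t; rewrite in_itv /= => /andP[t1 t2].
  apply: norm_dotv_accel_le => //; first cs_lra.
  by apply: proj_velocity_diam_le_mono hB; cs_lra.
- apply: within_continuous_comp => [w _|]; first exact: dotv_continuous.
  apply: continuous_subspaceW (v_cont a) => r /=.
  by rewrite !in_itv /= => /andP[r1 _]; rewrite andbT; cs_lra.
Qed.

Lemma proj_velocity_diam_growth m :
  proj_velocity_diam_le (m%:R * sigma) ((1 + 2 * sigma) ^+ m * Delta0 tau v).
Proof.
elim: m => [|m IH] a b s s'.
  rewrite mul0r expr0 mul1r => hs hs'.
  exact: le_trans (norm_dotv_le _ _ u1) (enorm_le_Delta0 v_cont _ _ hs hs').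
set T := m%:R * sigma; set B := (1 + 2 * sigma) ^+ m * Delta0 tau v.
have T0 : 0 <= T by rewrite mulr_ge0 ?ler0n ?ltW.
have B0 : 0 <= B by rewrite mulr_ge0 ?exprn_ge0 ?(Delta0_ge0 v_cont a); cs_lra.
have -> : m.+1%:R * sigma = T + sigma by rewrite -natr1 mulrDl mul1r.
move=> hs hs'.
have proj r : r \in `[- tau, T + sigma] -> Num.min r T \in `[- tau, T].
  by rewrite !in_itv /= => /andP[r1 _]; rewrite ge_min lexx orbT andbT le_min r1; cs_lra.
have := IH a b _ _ (proj _ hs) (proj _ hs').
have := proj_velocity_drift a T0 B0 IH hs; have := proj_velocity_drift b T0 B0 IH hs'.
rewrite exprS -mulrA -/B !linearB /=.
set p := dotv u (v a s); set p0 := dotv u (v a _).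
set q := dotv u (v b s'); set q0 := dotv u (v b _) => hq hp hpq.
have -> : p - q = (p - p0) + (p0 - q0) - (q - q0) by ring.
apply: le_trans (ler_normB _ _) _; apply: le_trans (lerD (ler_normD _ _) (lexx _)) _.
have -> : (1 + 2 * sigma) * B = B * sigma + B + B * sigma by ring.
by rewrite !lerD.
Qed.

Variables i j : 'I_N.

Definition proj_gap (t : R) := dotv u (x j (t - tau) - x i (t - sigma)).

Lemma is_derive_proj_gap (t : R) : 0 < t ->
  is_derive t 1 proj_gap (dotv u (v j (t - tau) - v i (t - sigma))).
Proof.
move=> t0; apply: is_derive_dotv.
by apply: is_deriveB; apply: is_derive_shift_arg; apply: x_deriv; cs_lra.
Qed.

Lemma proj_gap_continuous : {within `[0, +oo[, continuous proj_gap}.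
Proof.
apply: within_continuous_comp => [w _|]; first exact: dotv_continuous.
have shift k (c : R) : 0 <= c -> c <= tau ->
    {within `[0, +oo[, continuous (fun s => x k (s - c))}.
  move=> c0 ct; apply: within_continuous_shift (x_cont k) _ => r /=.
  by rewrite !in_itv /= !andbT => r0; cs_lra.
have cj := shift j tau; have ci := shift i sigma.
by move=> t; apply: cvgB; [apply: cj | apply: ci]; cs_lra.
Qed.

Lemma proj_gap_growth n (t : R) : t \in `[0, n%:R * sigma] ->
  proj_gap t - proj_gap 0 <= sigma * (\sum_(m < n) (1 + 2 * sigma) ^+ m) * Delta0 tau v.
Proof.
elim: n t => [|n IH] t; rewrite in_itv /= => /andP[t0 tn].
  by rewrite mul0r in tn; rewrite (_ : t = 0) ?subrr ?big_ord0 ?mulr0 ?mul0r //; cs_lra.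
have Dv0 : 0 <= Delta0 tau v by apply: (Delta0_ge0 v_cont i); cs_lra.
have nS : n.+1%:R * sigma = n%:R * sigma + sigma by rewrite -natr1 mulrDl mul1r.
have n0 : 0 <= n%:R * sigma by rewrite mulr_ge0 ?ler0n ?ltW.
rewrite big_ord_recr /= mulrDr mulrDl.
have [tn'|nt] := leP t (n%:R * sigma).
  have := IH t; rewrite in_itv /= t0 tn' => /(_ isT) /le_trans; apply.
  by rewrite lerDl !mulr_ge0 ?exprn_ge0 //; cs_lra.
rewrite -(subrKA (proj_gap (n%:R * sigma))) addrC.
apply: lerD; first by apply: IH; rewrite in_itv /= n0 lexx.
apply: le_trans (_ : (1 + 2 * sigma) ^+ n * Delta0 tau v * (t - n%:R * sigma) <= _).
  apply: diff_le_of_derive_le (ltW nt) _ _ _.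
  - by move=> r; rewrite in_itv /= => /andP[r1 _]; apply: is_derive_proj_gap; cs_lra.
  - move=> r; rewrite in_itv /= => /andP[r1 r2].
    apply: le_trans (ler_norm _) _; apply: proj_velocity_diam_growth;
      by rewrite in_itv /=; apply/andP; split; cs_lra.
  - apply: continuous_subspaceW proj_gap_continuous => r /=.
    by rewrite !in_itv /= => /andP[r1 _]; rewrite andbT; cs_lra.
rewrite -[leRHS]mulrA [leRHS]mulrC ler_wpM2l ?mulr_ge0 ?exprn_ge0 //; cs_lra.
Qed.

End Projection.

Lemma cs_position_gap_le i j K : 2%:R * tau <= K%:R * sigma ->
  enorm (x j tau - x i (2%:R * tau - sigma))
    <= Delta0 tau x + sigma * (\sum_(m < K) (1 + 2 * sigma) ^+ m) * Delta0 tau v.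
Proof.
move=> hK; have [u u1 uw] := exists_dotv_enorm (x j tau - x i (2%:R * tau - sigma)).
have t2 : 2%:R * tau \in `[0, K%:R * sigma] by rewrite in_itv /= hK andbT; cs_lra.
have := @proj_gap_growth u u1 i j K _ t2.
rewrite /proj_gap (_ : 2%:R * tau - tau = tau) ?uw; last cs_lra.
have gap0 : dotv u (x j (0 - tau) - x i (0 - sigma)) <= Delta0 tau x.
  apply: le_trans (ler_norm _) (le_trans (norm_dotv_le _ _ u1) _).
  by apply: (enorm_le_Delta0 x_cont); rewrite in_itv /=; apply/andP; split; cs_lra.
cs_lra.
Qed.

End CuckerSmale.

Theorem lemma4p5 (R : realType) (N d : nat) (hN : (2 <= N)%N) (hd : (1 <= d)%N)
  (sigma tau : R) (hsig : 0 < sigma) (hst : sigma <= tau)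
  (psi : R -> R)
  (psi_cont : {within `[0, +oo[, continuous psi})
  (psi_noninc : forall a b : R, 0 <= a -> a <= b -> psi b <= psi a)
  (psi_pos : forall r : R, 0 <= r -> 0 < psi r)
  (psi_le1 : forall r : R, 0 <= r -> psi r <= 1)
  (x v : 'I_N -> R -> 'rV[R]_d)
  (x_cont : forall i, {within `[- tau, +oo[, continuous (x i)})
  (v_cont : forall i, {within `[- tau, +oo[, continuous (v i)})
  (x_deriv : forall i (t : R), - tau < t -> is_derive t 1 (x i) (v i t))
  (v_ode : forall i (t : R), 0 < t ->
     is_derive t 1 (v i)
       (\sum_(j < N | j != i)
          cs_weight psi sigma tau x i j t *: (v j (t - tau) - v i (t - sigma))))
  (K : nat) (hK : 2%:R * tau <= K%:R * sigma)
  (hKmin : forall k : nat, (k < K)%N -> k%:R * sigma < 2%:R * tau) :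
  forall i j : 'I_N,
    enorm (x j tau - x i (2%:R * tau - sigma))
      <= Delta0 tau x + Ws sigma K * Delta0 tau v.
Proof.
move=> i j.
have tau0 : 0 < tau := lt_le_trans hsig hst.
have K2 : (2 <= K)%N.
  by case: K hK {hKmin} => [|[|k]] //; rewrite ?mul0r ?mul1r => hK; lra.
apply: le_trans (cs_position_gap_le hN hsig hst psi_pos psi_le1
  x_cont v_cont x_deriv v_ode i j K hK) _.
rewrite lerD2l ler_wpM2r ?geometric_le_Ws ?(ltW hsig) //.
exact: (Delta0_ge0 v_cont i (ltW tau0)).
Qed.
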